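(* Let $\theta\mapsto K_m(\theta)\in\mathbb{C}^{D\times D}$, $m=0,\dots,d-1$, be differentiable with $\sum_mK_m^\dagger K_m=\mathbb{1}_D$, and fix $\theta_0$. Suppose the Hamiltonian-in-Kraus-span (HKS) condition holds at $\theta_0$: $H_s:=i\sum_mK_m^\dagger\partial_\theta K_m\in\mathrm{span}\{K_i^\dagger K_j:0\le i,j<d\}$ (all evaluated at $\theta_0$). Then there is a Hermitian $h\in\mathbb{C}^{d\times d}$ such that, writing $u_\theta=e^{i\theta h}$ and defining the isometry $W_\theta=(\mathbb{1}_D\otimes u_\theta^\dagger)V_\theta$, i.e. $W_\theta=\sum_m W_m(\theta)\otimes|m\rangle$ with $V_\theta=\sum_mK_m(\theta)\otimes|m\rangle$, one has $V_\theta=(\mathbb{1}_D\otimes u_\theta)W_\theta$ for all $\theta$ and $$\sum_m W_m(\theta_0)^\dagger\,\partial_\theta W_m(\theta_0)=0.$$ Consequently, if $\rho_{ss}$ is a fixed point of the channel $\mathcal{E}(X)=\sum_mK_mXK_m^\dagger$ at $\theta_0$ (which is also the channel of $W$), the quantities $\gamma^W=\sum_m\mathrm{Tr}(W_m\rho_{ss}\dot W_m^\dagger)$ and $\beta^W_\tau=\mathrm{Tr}[\sum_m\dot W_m\mathcal{E}^\tau(\sum_nW_n\rho_{ss}\dot W_n^\dagger)W_m^\dagger]$ vanish for all $\tau\ge0$, and the quantum Fisher information at $\theta_0$ of the $T$-site state $|\Phi^W_T\rangle$ generated by $W$ equals $4T\alpha^W$ with $\alpha^W=\sum_m\mathrm{Tr}(\dot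 W_m\rho_{ss}\dot W_m^\dagger)$.
   Context: Dots denote $\partial_\theta$ at $\theta_0$. For a tensor $X=\sum_mX_m\otimes|m\rangle$ the $T$-site state is $|\Phi^X_T(\theta)\rangle=\sum_{\mathbf{m}}(\mathbb{1}_A\otimes X_{m_T}(\theta)\cdots X_{m_1}(\theta))|\xi\rangle\otimes|m_1\cdots m_T\rangle$, where $|\xi\rangle\in\mathbb{C}^D_A\otimes\mathbb{C}^D_S$ is a fixed $\theta$-independent purification of $\rho_{ss}$ (the translation-invariant MPS with boundary vectors identity and $\rho_{ss}$). Pure-state QFI is $4(\langle\dot\psi|\dot\psi\rangle-|\langle\dot\psi|\psi\rangle|^2)$. *)

From HB Require Import structures.
From mathcomp Require Import all_boot all_order all_algebra.
From mathcomp Require Import all_classical all_reals all_analysis.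
From mathcomp Require Import complex.
Set Implicit Arguments. Unset Strict Implicit. Unset Printing Implicit Defensive.
Import Order.TTheory GRing.Theory Num.Theory.
Import numFieldNormedType.Exports.
Local Open Scope ring_scope.
Local Open Scope complex_scope.

Section Defs.
Variable R : realType.
Local Notation C := R[i].

Definition adj m n (A : 'M[C]_(m, n)) : 'M[C]_(n, m) := (map_mx conjc A)^T.

Definition diffC (f : R -> C) (t : R) : Prop :=
  derivable (fun s => complex.Re (f s)) t 1 /\ derivable (fun s => complex.Im (f s)) t 1.

Definition dC (f : R -> C) (t : R) : C :=
  derive1 (fun s => complex.Re (f s)) t +i* derive1 (fun s => complex.Im (f s)) t.

Definition dmx m n (F : R -> 'M[C]_(m, n)) (t : R) : 'M[C]_(m, n) :=
  \matrix_(i, j) dC (fun s => F s i j) t.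

Definition mx_differentiable m n (F : R -> 'M[C]_(m, n)) : Prop :=
  forall t i j, diffC (fun s => F s i j) t.

Definition limC (u : nat -> C) : C :=
  (limn ((fun N => complex.Re (u N)) : R^nat) : R) +i* (limn ((fun N => complex.Im (u N)) : R^nat) : R).

Definition mxpow n (A : 'M[C]_n) (k : nat) : 'M[C]_n := iter k (mulmx A) 1%:M.

Definition mexp n (A : 'M[C]_n) : 'M[C]_n :=
  \matrix_(i, j) limC (fun N => (\sum_(k < N) (k`!%:R)^-1 *: mxpow A k) i j).

Definition uth d (h : 'M[C]_d) (th : R) : 'M[C]_d := mexp ((th%:C * 'i) *: h).

(* W_theta = (1_D (x) u_theta^dagger) V_theta, componentwise:
   W_n(theta) = sum_m conj(u_theta(m,n)) K_m(theta) *)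
Definition Wfam D d (K : R -> 'I_d -> 'M[C]_D) (h : 'M[C]_d) (th : R) (n : 'I_d)
  : 'M[C]_D := \sum_(m < d) (conjc (uth h th m n)) *: K th m.

Definition chan D d (K : 'I_d -> 'M[C]_D) (X : 'M[C]_D) : 'M[C]_D :=
  \sum_(m < d) K m *m X *m adj (K m).

(* X_{m_T} ... X_{m_1} for ms = [:: m_1; ...; m_T] *)
Definition mxprod D d (X : 'I_d -> 'M[C]_D) (ms : seq 'I_d) : 'M[C]_D :=
  foldl (fun acc m => X m *m acc) 1%:M ms.

(* T-site MPS state |Phi^X_T(theta)> = sum_ms (1_A (x) X_ms) |xi> (x) |ms>,
   with |xi> = sum_{a,s} xi a s |a>_A |s>_S; components indexed by (a, s', ms) *)
Definition mps_state D d T (X : R -> 'I_d -> 'M[C]_D) (xi : 'M[C]_D) (th : R)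
  (k : 'I_D * 'I_D * T.-tuple 'I_d) : C :=
  \sum_(s < D) mxprod (X th) k.2 k.1.2 s * xi k.1.1 s.

Definition qfi (I : finType) (psi : R -> I -> C) (t : R) : C :=
  4%:R * (\sum_i conjc (dC (fun s => psi s i) t) * dC (fun s => psi s i) t
          - `| \sum_i conjc (dC (fun s => psi s i) t) * psi t i | ^+ 2).

Definition redS D (xi : 'M[C]_D) : 'M[C]_D :=
  \matrix_(s, s') \sum_(a < D) xi a s * conjc (xi a s').

End Defs.

(* Differentiating sum_m K_m^+ K_m = 1 shows that S := sum_m K_m^+ K_m' is
   anti-Hermitian, so H_s = i S is Hermitian.  Writing H_s = sum_ij c_ij K_i^+ K_j
   and taking adjoints gives the same with c^+, so the Hermitian h := -(c + c^+)/2
   satisfies sum_ij h_ij K_i^+ K_j = -H_s.  Since u = exp(i theta h) is unitary,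
   W = (1 (x) u^+) V is again an isometry with the same channel, and
   sum_m W_m^+ W_m' = S - i sum_ij h_ij K_i^+ K_j = S + i H_s = 0.
   For the MPS generated by W, the derivative of W_{m_T} ... W_{m_1} is a sum of T
   terms with one factor differentiated: this gauge condition kills the overlap
   <dPhi|Phi> and the cross terms of <dPhi|dPhi>, and since rho_ss is a fixed point
   each of the T remaining terms equals alpha^W. *)

From HB Require Import structures.
From mathcomp Require Import all_boot all_order all_algebra.
From mathcomp Require Import all_classical all_reals all_analysis.
From mathcomp Require Import complex.
From mathcomp Require Import ring.
Import Order.TTheory GRing.Theory Num.Theory.
Import numFieldNormedType.Exports.
Set Implicit Arguments. Unset Strict Implicit. Unset Printing Implicit Defensive.
Local Open Scope classical_set_scope.
Local Open Scope ring_scope.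
Local Open Scope complex_scope.



Section Adjoint.
Variable R : realType.
Local Notation C := R[i].
Variables m n p : nat.

Lemma conjc_i : conjc ('i : C) = - 'i.
Proof. by apply/eqP; rewrite eq_complex /= oppr0 !eqxx. Qed.

Lemma adjK (A : 'M[C]_(m, n)) : adj (adj A) = A.
Proof. by apply/matrixP => i j; rewrite !mxE conjcK. Qed.

Lemma adj0 : adj (0 : 'M[C]_(m, n)) = 0.
Proof. by apply/matrixP => i j; rewrite !mxE rmorph0. Qed.

Lemma adj1 : adj (1%:M : 'M[C]_n) = 1%:M.
Proof. by apply/matrixP => i j; rewrite !mxE eq_sym rmorph_nat. Qed.

Lemma adjD (A B : 'M[C]_(m, n)) : adj (A + B) = adj A + adj B.
Proof. by apply/matrixP => i j; rewrite !mxE rmorphD. Qed.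

Lemma adjZ (c : C) (A : 'M[C]_(m, n)) : adj (c *: A) = conjc c *: adj A.
Proof. by apply/matrixP => i j; rewrite !mxE rmorphM. Qed.

Lemma adj_sum (I : Type) (r : seq I) (P : pred I) (F : I -> 'M[C]_(m, n)) :
  adj (\sum_(k <- r | P k) F k) = \sum_(k <- r | P k) adj (F k).
Proof.
apply/matrixP => i j; rewrite !mxE !summxE rmorph_sum.
by apply: eq_bigr => k _; rewrite !mxE.
Qed.

Lemma adj_mul (A : 'M[C]_(m, n)) (B : 'M[C]_(n, p)) : adj (A *m B) = adj B *m adj A.
Proof.
apply/matrixP => i j; rewrite !mxE rmorph_sum; apply: eq_bigr => k _.
by rewrite !mxE rmorphM mulrC.
Qed.

End Adjoint.

Lemma adj_sum_adj_mul (R : realType) m n p (I : finType)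
    (A : I -> 'M[R[i]]_(m, n)) (B : I -> 'M[R[i]]_(m, p)) :
  adj (\sum_i adj (A i) *m B i) = \sum_i adj (B i) *m A i.
Proof. by rewrite adj_sum; apply: eq_bigr => i _; rewrite adj_mul adjK. Qed.

Section ComplexDerivative.
Variable R : realType.
Local Notation C := R[i].
Implicit Types (f g : R -> C) (t : R) (z w : C).

Definition is_deriveC t f z :=
  is_derive t (1 : R) (fun s => complex.Re (f s)) (complex.Re z) /\
  is_derive t (1 : R) (fun s => complex.Im (f s)) (complex.Im z).

Lemma is_deriveC_dC t f z : is_deriveC t f z -> dC f t = z.
Proof.
by case=> dRe dIm; rewrite /dC !derive1E !derive_val; case: z {dRe dIm}.
Qed.

Lemma diffC_is_deriveC t f : diffC f t -> is_deriveC t f (dC f t).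
Proof. by case=> dRe dIm; split; apply: DeriveDef => //=; rewrite derive1E. Qed.

Lemma is_deriveC_cst t z : is_deriveC t (fun _ => z) 0.
Proof. by split; apply: is_derive_cst. Qed.

Lemma is_deriveCD t f g z w : is_deriveC t f z -> is_deriveC t g w ->
  is_deriveC t (fun s => f s + g s) (z + w).
Proof.
case=> fRe fIm [gRe gIm]; split; rewrite raddfD /=.
- by rewrite (_ : (fun s => _) = (fun s => complex.Re (f s)) + (fun s => complex.Re (g s)));
    [apply: is_deriveD | apply/funext => s; rewrite raddfD].
- by rewrite (_ : (fun s => _) = (fun s => complex.Im (f s)) + (fun s => complex.Im (g s)));
    [apply: is_deriveD | apply/funext => s; rewrite raddfD].
Qed.

Lemma complexReM z w :
  complex.Re (z * w) = complex.Re z * complex.Re w - complex.Im z * complex.Im w.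
Proof. by case: z; case: w. Qed.

Lemma complexImM z w :
  complex.Im (z * w) = complex.Re z * complex.Im w + complex.Im z * complex.Re w.
Proof. by case: z; case: w. Qed.

Lemma is_deriveCM t f g z w : is_deriveC t f z -> is_deriveC t g w ->
  is_deriveC t (fun s => f s * g s) (z * g t + f t * w).
Proof.
case=> fRe fIm [gRe gIm]; split.
- rewrite (_ : (fun s => _) = (fun s => complex.Re (f s)) * (fun s => complex.Re (g s))
                           - (fun s => complex.Im (f s)) * (fun s => complex.Im (g s))).
    apply: is_derive_eq (is_deriveB (is_deriveM fRe gRe) (is_deriveM fIm gIm)) _.
    by rewrite [RHS]raddfD /= !complexReM -![_ *: _]/(_ * _); ring.
  by apply/funext => s /=; rewrite complexReM.
- rewrite (_ : (fun s => _) = (fun s => complex.Re (f s)) * (fun s => complex.Im (g s))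
                           + (fun s => complex.Im (f s)) * (fun s => complex.Re (g s))).
    apply: is_derive_eq (is_deriveD (is_deriveM fRe gIm) (is_deriveM fIm gRe)) _.
    by rewrite [RHS]raddfD /= !complexImM -![_ *: _]/(_ * _); ring.
  by apply/funext => s /=; rewrite complexImM.
Qed.

Lemma is_deriveCJ t f z : is_deriveC t f z ->
  is_deriveC t (fun s => conjc (f s)) (conjc z).
Proof.
have ReJ (x : C) : complex.Re (conjc x) = complex.Re x by case: x.
have ImJ (x : C) : complex.Im (conjc x) = - complex.Im x by case: x.
case=> fRe fIm; split; rewrite ?ReJ ?ImJ.
- by rewrite (_ : (fun s => _) = (fun s => complex.Re (f s))) //; apply/funext => s; rewrite ReJ.
- rewrite (_ : (fun s => _) = - (fun s => complex.Im (f s))); first exact: is_deriveN.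
  by apply/funext => s; rewrite ImJ.
Qed.

Lemma is_deriveC_sum t (I : Type) (r : seq I) (P : pred I) (F : I -> R -> C) (dF : I -> C) :
  (forall i, P i -> is_deriveC t (F i) (dF i)) ->
  is_deriveC t (fun s => \sum_(i <- r | P i) F i s) (\sum_(i <- r | P i) dF i).
Proof.
move=> dFi; elim: r => [|a r IHr].
  by under eq_fun do rewrite big_nil; rewrite big_nil; apply: is_deriveC_cst.
under eq_fun do rewrite big_cons; rewrite big_cons.
by case: ifP => Pa //; apply: is_deriveCD => //; apply: dFi.
Qed.

End ComplexDerivative.

Section MatrixDerivative.
Variable R : realType.
Local Notation C := R[i].
Variables m n p : nat.
Implicit Types (t : R).

Definition is_derivemx k l t (F : R -> 'M[C]_(k, l)) (A : 'M[C]_(k, l)) :=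
  forall i j, is_deriveC t (fun s => F s i j) (A i j).

Lemma is_derivemx_dmx t (F : R -> 'M[C]_(m, n)) A : is_derivemx t F A -> dmx F t = A.
Proof. by move=> dF; apply/matrixP => i j; rewrite mxE; apply: is_deriveC_dC. Qed.

Lemma is_derivemx_to_dmx t (F : R -> 'M[C]_(m, n)) A :
  is_derivemx t F A -> is_derivemx t F (dmx F t).
Proof. by move=> dF; rewrite (is_derivemx_dmx dF). Qed.

Lemma mx_differentiable_is_derivemx t (F : R -> 'M[C]_(m, n)) :
  mx_differentiable F -> is_derivemx t F (dmx F t).
Proof. by move=> dF i j; rewrite mxE; apply: diffC_is_deriveC. Qed.

Lemma is_derivemx_cst t (A : 'M[C]_(m, n)) : is_derivemx t (fun _ => A) 0.
Proof. by move=> i j; rewrite mxE; apply: is_deriveC_cst. Qed.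

Lemma is_derivemx_sum t (I : Type) (r : seq I) (P : pred I)
    (F : I -> R -> 'M[C]_(m, n)) (dF : I -> 'M[C]_(m, n)) :
  (forall k, P k -> is_derivemx t (F k) (dF k)) ->
  is_derivemx t (fun s => \sum_(k <- r | P k) F k s) (\sum_(k <- r | P k) dF k).
Proof.
move=> dFk i j; under eq_fun do rewrite summxE; rewrite summxE.
by apply: is_deriveC_sum => k Pk; apply: dFk.
Qed.

Lemma is_derivemx_mul t (F : R -> 'M[C]_(m, n)) (G : R -> 'M[C]_(n, p)) A B :
  is_derivemx t F A -> is_derivemx t G B ->
  is_derivemx t (fun s => F s *m G s) (A *m G t + F t *m B).
Proof.
move=> dF dG i j; under eq_fun do rewrite mxE; rewrite !mxE -big_split /=.
by apply: is_deriveC_sum => k _; apply: is_deriveCM.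
Qed.

Lemma is_derivemx_adj t (F : R -> 'M[C]_(m, n)) A :
  is_derivemx t F A -> is_derivemx t (fun s => adj (F s)) (adj A).
Proof.
by move=> dF i j; under eq_fun do rewrite !mxE; rewrite !mxE; apply: is_deriveCJ.
Qed.

Lemma is_derivemx_scale t (f : R -> C) (F : R -> 'M[C]_(m, n)) z A :
  is_deriveC t f z -> is_derivemx t F A ->
  is_derivemx t (fun s => f s *: F s) (z *: F t + f t *: A).
Proof.
by move=> df dF i j; under eq_fun do rewrite mxE; rewrite !mxE; apply: is_deriveCM.
Qed.

Lemma is_derivemx0_cst (F : R -> 'M[C]_(m, n)) s t :
  (forall t, is_derivemx t F 0) -> F s = F t.
Proof.
move=> dF0; apply/matrixP => i j; apply/eqP; rewrite eq_complex.
have [dRe dIm] : (forall t, is_derive t 1 (fun s => complex.Re (F s i j)) 0) /\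
                 (forall t, is_derive t 1 (fun s => complex.Im (F s i j)) 0).
  by split=> u; have [] := dF0 u i j; rewrite mxE.
by rewrite (is_derive_0_is_cst s t dRe) (is_derive_0_is_cst s t dIm) !eqxx.
Qed.

End MatrixDerivative.

Section PowerSeries.
Variable R : realType.
Local Notation C := R[i].
Local Notation normc := (@Num.norm R (Rcomplex R)).

Lemma normcM (z w : C) : normc (z * w) = normc z * normc w.
Proof. exact: Normc.normcM. Qed.

Lemma normc_real (r : R) : normc r%:C = `|r|.
Proof. by rewrite -[LHS]/(Normc.normc _) /= expr0n addr0 sqrtr_sqr. Qed.

Lemma normc1 : normc 1 = 1.
Proof. by rewrite -(rmorph1 (real_complex R)) normc_real normr1. Qed.

Lemma normc_i : normc 'i = 1.
Proof. by rewrite -[LHS]/(Normc.normc _) /= expr0n expr1n add0r sqrtr1. Qed.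

Lemma normc_Re (z : C) : `|complex.Re z| <= normc z.
Proof. by case: z => a b /=; rewrite -sqrtr_sqr ler_wsqrtr // lerDl sqr_ge0. Qed.

Lemma normc_Im (z : C) : `|complex.Im z| <= normc z.
Proof. by case: z => a b /=; rewrite -sqrtr_sqr ler_wsqrtr // lerDr sqr_ge0. Qed.

Definition exp_dominated (M B : R) (c : R^nat) :=
  forall k, `|c k| <= M * (B ^+ k / k`!%:R).

Lemma exp_dominated_diffs M B c :
  exp_dominated M B c -> exp_dominated (M * B) B (pseries_diffs c).
Proof.
move=> dom_c k; rewrite /pseries_diffs normrM normr_nat.
have kS0 : (k.+1%:R : R) != 0 by rewrite pnatr_eq0.
have kf0 : (k`!%:R : R) != 0 by rewrite pnatr_eq0 -lt0n fact_gt0.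
have -> : M * B * (B ^+ k / k`!%:R) = k.+1%:R * (M * (B ^+ k.+1 / k.+1`!%:R)).
  by rewrite factS natrM exprS; field; rewrite kf0 addrC natr1 kS0.
exact: ler_wpM2l (dom_c k.+1).
Qed.

Lemma exp_dominated_pseries_cvg M B c x : 0 <= M -> 0 <= B ->
  exp_dominated M B c -> cvgn (pseries c x).
Proof.
move=> M0 B0 dom_c; apply: normed_cvg.
apply: (@series_le_cvg _ _ (M *: exp_coeff (B * `|x|))) => [k|k|k|].
- exact: normr_ge0.
- by rewrite /exp_coeff /= mulr_ge0 // divr_ge0 // exprn_ge0 // mulr_ge0.
- rewrite /exp_coeff /= normrM normrX (_ : (M *: _) k = M * ((B * `|x|) ^+ k / k`!%:R)) // exprMn.
  apply: le_trans (ler_wpM2r (exprn_ge0 _ (normr_ge0 x)) (dom_c k)) _.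
  by rewrite -!mulrA ler_wpM2l // [_ * `|x| ^+ k]mulrC mulrA.
- exact/is_cvg_seriesZ/is_cvg_series_exp_coeff.
Qed.

Lemma is_derive_exp_dominated_pseries M B c (x : R) : 0 <= M -> 0 <= B ->
  exp_dominated M B c ->
  is_derive x (1 : R) (fun y : R => limn (pseries c y)) (limn (pseries (pseries_diffs c) x)).
Proof.
move=> M0 B0 dom_c.
have MB0 := mulr_ge0 M0 B0.
have dom_c' := exp_dominated_diffs dom_c.
have dom_c'' := exp_dominated_diffs dom_c'.
apply: (@pseries_snd_diffs _ c (`|x| + 1)).
- exact: exp_dominated_pseries_cvg M0 B0 dom_c.
- exact: exp_dominated_pseries_cvg MB0 B0 dom_c'.
- exact: exp_dominated_pseries_cvg (mulr_ge0 MB0 B0) B0 dom_c''.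
- by rewrite [X in _ < X]ger0_norm ?addr_ge0 // ltrDl.
Qed.

Definition cvgC (u : nat -> C) (z : C) :=
  (fun N => complex.Re (u N)) @ \oo --> complex.Re z /\
  (fun N => complex.Im (u N)) @ \oo --> complex.Im z.

Lemma cvgC_limC u z : cvgC u z -> limC u = z.
Proof.
by case=> cRe cIm; rewrite /limC (cvg_lim _ cRe) // (cvg_lim _ cIm) //; case: z {cRe cIm}.
Qed.

Lemma cvgC_lincomb (I : finType) (c : I -> C) (u : I -> nat -> C) (z : I -> C) :
  (forall i, cvgC (u i) (z i)) -> cvgC (fun N => \sum_i c i * u i N) (\sum_i c i * z i).
Proof.
move=> cvg_u; split.
- have -> : (fun N => complex.Re (\sum_i c i * u i N)) = (fun N => \sum_i
      (complex.Re (c i) * complex.Re (u i N) - complex.Im (c i) * complex.Im (u i N))).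
    by apply/funext => N; rewrite raddf_sum /=; under eq_bigr do rewrite complexReM.
  rewrite raddf_sum /=; under eq_bigr do rewrite complexReM.
  apply: cvg_big => [|i _]; first exact: add_continuous.
  by have [cRe cIm] := cvg_u i; apply: cvgB; apply: cvgMl_tmp.
- have -> : (fun N => complex.Im (\sum_i c i * u i N)) = (fun N => \sum_i
      (complex.Re (c i) * complex.Im (u i N) + complex.Im (c i) * complex.Re (u i N))).
    by apply/funext => N; rewrite raddf_sum /=; under eq_bigr do rewrite complexImM.
  rewrite raddf_sum /=; under eq_bigr do rewrite complexImM.
  apply: cvg_big => [|i _]; first exact: add_continuous.
  by have [cRe cIm] := cvg_u i; apply: cvgD; apply: cvgMl_tmp.
Qed.

Definition cpseries (a : nat -> C) (x : R) (N : nat) : C :=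
  \sum_(k < N) x%:C ^+ k * a k.

Definition cexp_dominated (B : R) (a : nat -> C) :=
  forall k, normc (a k) <= B ^+ k / k`!%:R.

Lemma Re_cpseries a x :
  (fun N => complex.Re (cpseries a x N)) = pseries (fun k => complex.Re (a k)) x.
Proof.
apply/funext => N; rewrite /cpseries /pseries /series /= raddf_sum big_mkord.
by apply: eq_bigr => k _; rewrite /= -rmorphXn complexReM /= mul0r subr0 mulrC.
Qed.

Lemma Im_cpseries a x :
  (fun N => complex.Im (cpseries a x N)) = pseries (fun k => complex.Im (a k)) x.
Proof.
apply/funext => N; rewrite /cpseries /pseries /series /= raddf_sum big_mkord.
by apply: eq_bigr => k _; rewrite /= -rmorphXn complexImM /= mul0r addr0 mulrC.
Qed.

Section DominatedCoefficients.
Variables (B : R) (a : nat -> C).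
Hypotheses (B0 : 0 <= B) (dom_a : cexp_dominated B a).

Let dom_Re : exp_dominated 1 B (fun k => complex.Re (a k)).
Proof. by move=> k; rewrite mul1r (le_trans (normc_Re _)). Qed.

Let dom_Im : exp_dominated 1 B (fun k => complex.Im (a k)).
Proof. by move=> k; rewrite mul1r (le_trans (normc_Im _)). Qed.

Lemma cpseries_cvg x : cvgC (cpseries a x) (limC (cpseries a x)).
Proof.
by split; rewrite /= ?Re_cpseries ?Im_cpseries;
  apply: exp_dominated_pseries_cvg ler01 B0 _.
Qed.

Lemma is_deriveC_cpseries x : is_deriveC x (fun y => limC (cpseries a y))
  (limC (cpseries (fun k => k.+1%:R * a k.+1) x)).
Proof.
have natM (k : nat) (z : C) : k%:R * z = (k%:R : R)%:C * z by rewrite rmorph_nat.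
split=> /=; under eq_fun do rewrite ?Re_cpseries ?Im_cpseries;
  rewrite ?Re_cpseries ?Im_cpseries.
- apply: is_derive_eq (is_derive_exp_dominated_pseries x ler01 B0 dom_Re) _.
  by congr (limn (pseries _ _)); apply/funext => k; rewrite natM complexReM /= mul0r subr0.
- apply: is_derive_eq (is_derive_exp_dominated_pseries x ler01 B0 dom_Im) _.
  by congr (limn (pseries _ _)); apply/funext => k; rewrite natM complexImM /= mul0r addr0.
Qed.

End DominatedCoefficients.

End PowerSeries.

Section MatrixExponential.
Variable R : realType.
Local Notation C := R[i].
Local Notation normc := (@Num.norm R (Rcomplex R)).
Variable d : nat.
Implicit Types (h : 'M[C]_d) (s x : R).

Lemma mxpowS h k : mxpow h k.+1 = h *m mxpow h k.
Proof. by []. Qed.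

Lemma mxpow_scale (c : C) h k : mxpow (c *: h) k = c ^+ k *: mxpow h k.
Proof.
elim: k => [|k IHk]; first by rewrite expr0 scale1r.
by rewrite !mxpowS IHk -scalemxAl -scalemxAr scalerA exprS.
Qed.

Definition expi_coef h (i j : 'I_d) (k : nat) : C :=
  (k`!%:R)^-1 * 'i ^+ k * mxpow h k i j.

Lemma uth_cpseries h s i j : uth h s i j = limC (cpseries (expi_coef h i j) s).
Proof.
rewrite /uth /mexp mxE; congr limC; apply/funext => N; rewrite summxE.
by apply: eq_bigr => k _; rewrite !mxE mxpow_scale mxE exprMn /expi_coef; ring.
Qed.

Definition mxnorm1 h : R := \sum_i \sum_j normc (h i j).

Lemma mxnorm1_ge0 h : 0 <= mxnorm1 h.
Proof. by rewrite sumr_ge0 // => i _; rewrite sumr_ge0. Qed.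

Lemma normc_mxpow h k i j : normc (mxpow h k i j) <= mxnorm1 h ^+ k.
Proof.
have row_le l : \sum_j normc (h l j) <= mxnorm1 h.
  by rewrite /mxnorm1 [X in _ <= X](bigD1 l) //= lerDl sumr_ge0 // => *; rewrite sumr_ge0.
elim: k i j => [|k IHk] i j.
  by rewrite mxE expr0; case: (i == j); rewrite ?normr0 ?normc1.
rewrite mxpowS mxE; apply: le_trans (ler_norm_sum _ _ _) _.
apply: (@le_trans _ _ (\sum_l normc (h i l) * mxnorm1 h ^+ k)).
  by apply: ler_sum => l _; rewrite normcM ler_wpM2l.
by rewrite -mulr_suml exprS ler_wpM2r ?row_le ?exprn_ge0 ?mxnorm1_ge0.
Qed.

Lemma expi_coef_dominated h i j : cexp_dominated (mxnorm1 h) (expi_coef h i j).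
Proof.
move=> k; rewrite /expi_coef !normcM mulrC.
have -> : normc (k`!%:R^-1 : C) = k`!%:R^-1.
  by rewrite -(rmorph_nat (real_complex R)) -fmorphV normc_real ger0_norm.
have -> : normc ('i ^+ k) = 1.
  by elim: k => [|k IHk]; rewrite ?expr0 ?normc1 // exprS normcM IHk normc_i mulr1.
by rewrite mulr1 ler_wpM2r ?invr_ge0 ?normc_mxpow.
Qed.

Lemma cpseries_expi_coef_diffs h i j x N :
  cpseries (fun k => k.+1%:R * expi_coef h i j k.+1) x N
  = \sum_l ('i * h i l) * cpseries (expi_coef h l j) x N.
Proof.
rewrite /cpseries; under [RHS]eq_bigr do rewrite mulr_sumr.
rewrite exchange_big /=; apply: eq_bigr => k _.
rewrite /expi_coef mxpowS mxE !mulr_sumr; apply: eq_bigr => l _.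
have kS0 : (k.+1%:R : C) != 0 by rewrite pnatr_eq0.
have kf0 : (k`!%:R : C) != 0 by rewrite pnatr_eq0 -lt0n fact_gt0.
by rewrite factS natrM invfM exprS; field; rewrite kf0 addrC natr1 kS0.
Qed.

Lemma is_derivemx_uth h x : is_derivemx x (uth h) ('i *: h *m uth h x).
Proof.
have B0 := mxnorm1_ge0 h.
move=> i j; under eq_fun do rewrite uth_cpseries.
suff -> : ('i *: h *m uth h x) i j = limC (cpseries (fun k => k.+1%:R * expi_coef h i j k.+1) x).
  exact: is_deriveC_cpseries B0 (expi_coef_dominated h i j) x.
symmetry; apply: cvgC_limC; rewrite mxE; under eq_bigr do rewrite mxE.
rewrite (_ : cpseries _ x = fun N => \sum_l ('i * h i l) * cpseries (expi_coef h l j) x N).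
  apply: cvgC_lincomb => l; rewrite uth_cpseries.
  exact: cpseries_cvg B0 (expi_coef_dominated h l j) x.
by apply/funext => N; rewrite cpseries_expi_coef_diffs.
Qed.

Lemma uth0 h : uth h 0 = 1%:M.
Proof.
apply/matrixP => i j; rewrite uth_cpseries; apply: cvgC_limC.
have -> : (1%:M : 'M[C]_d) i j = expi_coef h i j 0.
  by rewrite /expi_coef fact0 invr1 expr0 !mul1r.
have cst N : (0 < N)%N -> cpseries (expi_coef h i j) 0 N = expi_coef h i j 0.
  case: N => // N _; rewrite /cpseries big_ord_recl expr0 mul1r big1 ?addr0 // => k _.
  by rewrite exprS rmorph0 !mul0r.
by split; apply: cvg_near_cst; exists 1%N => // N /= /cst ->.
Qed.

Lemma uth_unitary h : adj h = h -> forall s,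
  adj (uth h s) *m uth h s = 1%:M /\ uth h s *m adj (uth h s) = 1%:M.
Proof.
move=> h_herm s.
suff isoU : adj (uth h s) *m uth h s = 1%:M by split; last apply: mulmx1C.
rewrite (@is_derivemx0_cst _ _ _ (fun t => adj (uth h t) *m uth h t) s 0) ?uth0 ?adj1 ?mulmx1 //.
move=> t; have := is_derivemx_mul (is_derivemx_adj (is_derivemx_uth h t)) (is_derivemx_uth h t).
(* Generalizing [uth h t] keeps [mulmx0] from unfolding the exponential series. *)
rewrite (_ : _ + _ = 0) //; move: (uth h t) => U.
by rewrite adj_mul adjZ h_herm conjc_i -mulmxA -mulmxDr -mulmxDl scaleNr addNr mul0mx mulmx0.
Qed.

End MatrixExponential.

Section KrausMixing.
Variable R : realType.
Local Notation C := R[i].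
Variables D d : nat.
Implicit Types (U V M : 'M[C]_d) (A B : 'I_d -> 'M[C]_D).

(* [mixmx U A] is [(1 (x) U^+) sum_m A m (x) |m>] in components: [Wfam K h th]
   is convertible to [mixmx (uth h th) (K th)]. *)
Definition mixmx U A (n : 'I_d) : 'M[C]_D := \sum_m conjc (U m n) *: A m.

(* The HKS condition reads [H_s = gramc K K c]. *)
Definition gramc A B M : 'M[C]_D := \sum_i \sum_j M i j *: (adj (A i) *m B j).

Lemma sum_scale_mx1 (F : 'I_d -> 'M[C]_D) i : \sum_j (1%:M : 'M[C]_d) i j *: F j = F i.
Proof.
rewrite (bigD1 i) //= mxE eqxx scale1r big1 ?addr0 // => j ji.
by rewrite mxE eq_sym (negbTE ji) scale0r.
Qed.

Lemma gramc1 A B : gramc A B 1%:M = \sum_m adj (A m) *m B m.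
Proof. by apply: eq_bigr => i _; rewrite sum_scale_mx1. Qed.

Lemma gramcD A B M1 M2 : gramc A B (M1 + M2) = gramc A B M1 + gramc A B M2.
Proof.
rewrite /gramc -big_split; apply: eq_bigr => i _; rewrite -big_split.
by apply: eq_bigr => j _; rewrite mxE scalerDl.
Qed.

Lemma gramcZ A B (c : C) M : gramc A B (c *: M) = c *: gramc A B M.
Proof.
rewrite /gramc scaler_sumr; apply: eq_bigr => i _; rewrite scaler_sumr.
by apply: eq_bigr => j _; rewrite mxE scalerA.
Qed.

Lemma adj_gramc A M : adj (gramc A A M) = gramc A A (adj M).
Proof.
rewrite /gramc adj_sum exchange_big /=; apply: eq_bigr => i _.
by rewrite adj_sum; apply: eq_bigr => j _; rewrite adjZ adj_mul adjK !mxE.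
Qed.

Lemma gram_mixmx U V A B :
  \sum_n adj (mixmx U A n) *m mixmx V B n = gramc A B (U *m adj V).
Proof.
transitivity (\sum_n \sum_i \sum_j (U i n * conjc (V j n)) *: (adj (A i) *m B j)).
  apply: eq_bigr => n _; rewrite adj_sum mulmx_suml; apply: eq_bigr => i _.
  rewrite mulmx_sumr; apply: eq_bigr => j _.
  by rewrite adjZ conjcK -scalemxAl -scalemxAr scalerA.
rewrite exchange_big; apply: eq_bigr => i _; rewrite exchange_big; apply: eq_bigr => j _.
by rewrite mxE scaler_suml; apply: eq_bigr => n _; rewrite !mxE.
Qed.

Section Unitary.
Variable U : 'M[C]_d.
Hypothesis U_unitary : U *m adj U = 1%:M.

Lemma gram_mixmx_unitary A B :
  \sum_n adj (mixmx U A n) *m mixmx U B n = \sum_m adj (A m) *m B m.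
Proof. by rewrite gram_mixmx U_unitary gramc1. Qed.

Lemma chan_mixmx_unitary A : chan (mixmx U A) =1 chan A.
Proof.
move=> X; rewrite /chan.
transitivity (\sum_n \sum_j \sum_i (U j n * conjc (U i n)) *: (A i *m X *m adj (A j))).
  apply: eq_bigr => n _; rewrite adj_sum mulmx_sumr; apply: eq_bigr => j _.
  rewrite !mulmx_suml; apply: eq_bigr => i _.
  by rewrite adjZ conjcK -!scalemxAl -scalemxAr scalerA mulrC.
rewrite exchange_big; apply: eq_bigr => j _; rewrite exchange_big /=.
rewrite -[RHS](sum_scale_mx1 (fun i => A i *m X *m adj (A j))) -U_unitary.
by apply: eq_bigr => i _; rewrite mxE scaler_suml; apply: eq_bigr => n _; rewrite !mxE.
Qed.

Lemma mixmxK A m : A m = \sum_n U m n *: mixmx U A n.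
Proof.
transitivity (\sum_n \sum_j (U m n * conjc (U j n)) *: A j); last first.
  by apply: eq_bigr => n _; rewrite scaler_sumr; apply: eq_bigr => j _; rewrite scalerA.
rewrite exchange_big -[LHS](sum_scale_mx1 A) -U_unitary.
by apply: eq_bigr => j _; rewrite mxE scaler_suml; apply: eq_bigr => n _; rewrite !mxE.
Qed.

End Unitary.

Lemma is_derivemx_mixmx t (Uf : R -> 'M[C]_d) (Af : R -> 'I_d -> 'M[C]_D) dU dA n :
  is_derivemx t Uf dU -> (forall m, is_derivemx t (Af^~ m) (dA m)) ->
  is_derivemx t (fun s => mixmx (Uf s) (Af s) n) (mixmx dU (Af t) n + mixmx (Uf t) dA n).
Proof.
move=> dUf dAf; rewrite /mixmx -big_split /=.
apply: is_derivemx_sum => m _; apply: is_derivemx_scale (dAf m).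
by apply: is_deriveCJ; apply: dUf.
Qed.

End KrausMixing.

Section MatrixProductStates.
Variable R : realType.
Local Notation C := R[i].
Variables D d : nat.
Implicit Types (X dX : 'I_d -> 'M[C]_D) (ms : seq 'I_d).

Lemma sum_mxtrace_mul_adj (I : finType) (A B : I -> 'M[C]_D) (Y : 'M[C]_D) :
  \sum_i \tr (A i *m Y *m adj (B i)) = \tr ((\sum_i adj (B i) *m A i) *m Y).
Proof.
rewrite mulmx_suml raddf_sum; apply: eq_bigr => i _.
by rewrite mxtrace_mulC !mulmxA.
Qed.

Lemma sum_tuple0 (V : nmodType) (I : finType) (F : 0.-tuple I -> V) :
  \sum_ms F ms = F [tuple].
Proof.
rewrite (eq_bigr (fun _ => F [tuple])) => [|ms _]; last by rewrite tuple0.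
by rewrite sumr_const card_tuple expn0.
Qed.

Lemma sum_tupleS (V : nmodType) (I : finType) T (F : T.+1.-tuple I -> V) :
  \sum_ms F ms = \sum_m \sum_(ms : T.-tuple I) F [tuple of m :: ms].
Proof.
rewrite pair_bigA /= (reindex (fun p : I * T.-tuple I => [tuple of p.1 :: p.2])) //.
exists (fun ms : T.+1.-tuple I => (thead ms, [tuple of behead ms])).
  by move=> [m ms] _; rewrite theadE; congr pair; apply: val_inj.
by move=> ms _; rewrite [RHS]tuple_eta.
Qed.

Lemma mxprod_cons X m ms : mxprod X (m :: ms) = mxprod X ms *m X m.
Proof.
suff foldl_mul (A : 'M[C]_D) : foldl (fun acc m => X m *m acc) A ms = mxprod X ms *m A.
  by rewrite /mxprod /= foldl_mul mulmx1.
rewrite /mxprod; elim: ms A => [|m' ms IHms] A /=; first by rewrite mul1mx.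
by rewrite IHms [in RHS]IHms mulmx1 mulmxA.
Qed.

Fixpoint dmxprod X dX ms : 'M[C]_D :=
  if ms is m :: ms' then dmxprod X dX ms' *m X m + mxprod X ms' *m dX m else 0.

Lemma is_derivemx_mxprod t (Xf : R -> 'I_d -> 'M[C]_D) dX :
  (forall m, is_derivemx t (Xf^~ m) (dX m)) ->
  forall ms, is_derivemx t (fun s => mxprod (Xf s) ms) (dmxprod (Xf t) dX ms).
Proof.
move=> dXf; elim=> [|m ms IHms] /=; first exact: is_derivemx_cst.
under eq_fun do rewrite mxprod_cons.
exact: is_derivemx_mul.
Qed.

Lemma sum_sandwichD X dX (A B rho : 'M[C]_D) :
  \sum_m (A *m X m + B *m dX m) *m rho *m adj (A *m X m + B *m dX m) =
  A *m (\sum_m X m *m rho *m adj (X m)) *m adj A +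
  A *m (\sum_m X m *m rho *m adj (dX m)) *m adj B +
  B *m (\sum_m dX m *m rho *m adj (X m)) *m adj A +
  B *m (\sum_m dX m *m rho *m adj (dX m)) *m adj B.
Proof.
rewrite !mulmx_sumr !mulmx_suml -!big_split /=; apply: eq_bigr => m _.
rewrite adjD !adj_mul !mulmxDl !mulmxDr !mulmxA !addrA.
by rewrite -!addrA; congr (_ + _); rewrite addrC -!addrA; congr (_ + _); rewrite addrC.
Qed.

Section Isometry.
Variables X dX : 'I_d -> 'M[C]_D.
Hypothesis X_iso : \sum_m adj (X m) *m X m = 1%:M.
Hypothesis X_gauge : \sum_m adj (X m) *m dX m = 0.

Lemma mxprod_isometry T :
  \sum_(ms : T.-tuple 'I_d) adj (mxprod X ms) *m mxprod X ms = 1%:M.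
Proof.
elim: T => [|T IHT]; first by rewrite sum_tuple0 adj1 mulmx1.
rewrite sum_tupleS -[RHS]X_iso; apply: eq_bigr => m _.
transitivity (adj (X m) *m (\sum_(ms : T.-tuple 'I_d) adj (mxprod X ms) *m mxprod X ms) *m X m).
  rewrite mulmx_sumr mulmx_suml; apply: eq_bigr => ms _.
  by rewrite mxprod_cons adj_mul !mulmxA.
by rewrite IHT mulmx1.
Qed.

Lemma sum_adj_dmxprod_mxprod T :
  \sum_(ms : T.-tuple 'I_d) adj (dmxprod X dX ms) *m mxprod X ms = 0.
Proof.
elim: T => [|T IHT]; first by rewrite sum_tuple0 /= adj0 mul0mx.
rewrite sum_tupleS; transitivity (\sum_m adj (dX m) *m X m); last first.
  by rewrite -adj_sum_adj_mul X_gauge adj0.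
apply: eq_bigr => m _.
transitivity
  (adj (X m) *m (\sum_(ms : T.-tuple 'I_d) adj (dmxprod X dX ms) *m mxprod X ms) *m X m
   + adj (dX m) *m (\sum_(ms : T.-tuple 'I_d) adj (mxprod X ms) *m mxprod X ms) *m X m).
  rewrite !mulmx_sumr !mulmx_suml -big_split /=.
  by apply: eq_bigr => ms _; rewrite mxprod_cons adjD !adj_mul mulmxDl !mulmxA.
by rewrite IHT mxprod_isometry mulmx0 mul0mx add0r mulmx1.
Qed.

Lemma sum_adj_mxprod_dmxprod T :
  \sum_(ms : T.-tuple 'I_d) adj (mxprod X ms) *m dmxprod X dX ms = 0.
Proof. by rewrite -adj_sum_adj_mul sum_adj_dmxprod_mxprod adj0. Qed.

Variable rho : 'M[C]_D.
Hypothesis rho_fix : chan X rho = rho.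

(* Each new site adds alpha: rho is a fixed point of the channel, and the cross
   terms vanish by the gauge condition. *)
Lemma sum_mxtrace_dmxprod T :
  \sum_(ms : T.-tuple 'I_d) \tr (dmxprod X dX ms *m rho *m adj (dmxprod X dX ms))
  = T%:R * \sum_m \tr (dX m *m rho *m adj (dX m)).
Proof.
elim: T => [|T IHT]; first by rewrite sum_tuple0 /= !mul0mx mxtrace0 mul0r.
set alpha := \sum_m _ in IHT *.
rewrite sum_tupleS exchange_big /=.
under eq_bigr do rewrite -raddf_sum /= sum_sandwichD -/(chan X rho) rho_fix !raddfD.
rewrite !big_split /= IHT.
rewrite (sum_mxtrace_mul_adj (fun ms : T.-tuple 'I_d => dmxprod X dX ms) (mxprod X)).
rewrite (sum_mxtrace_mul_adj (fun ms : T.-tuple 'I_d => mxprod X ms) (dmxprod X dX)).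
rewrite (sum_mxtrace_mul_adj (fun ms : T.-tuple 'I_d => mxprod X ms) (mxprod X)).
rewrite sum_adj_dmxprod_mxprod sum_adj_mxprod_dmxprod mxprod_isometry.
by rewrite !mul0mx mul1mx !mxtrace0 !addr0 raddf_sum -/alpha mulrSr mulrDl mul1r.
Qed.

End Isometry.

Lemma purification_inner (P1 P2 xi : 'M[C]_D) :
  \sum_a \sum_r conjc (\sum_s P1 r s * xi a s) * (\sum_s P2 r s * xi a s)
  = \tr (P2 *m redS xi *m adj P1).
Proof.
rewrite exchange_big /= /mxtrace; apply: eq_bigr => r _; rewrite !mxE.
transitivity (\sum_a \sum_s' \sum_s conjc (P1 r s') * conjc (xi a s') * (P2 r s * xi a s)).
  apply: eq_bigr => a _; rewrite rmorph_sum mulr_suml; apply: eq_bigr => s' _.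
  by rewrite rmorphM mulr_sumr.
rewrite exchange_big; under eq_bigr do rewrite exchange_big.
apply: eq_bigr => s' _; rewrite !mxE mulr_suml; apply: eq_bigr => s _.
by rewrite !mxE mulr_sumr mulr_suml; apply: eq_bigr => a _; ring.
Qed.

Lemma sum_mps_inner T (P1 P2 : seq 'I_d -> 'M[C]_D) (xi : 'M[C]_D) :
  \sum_(k : 'I_D * 'I_D * T.-tuple 'I_d)
    conjc (\sum_s P1 k.2 k.1.2 s * xi k.1.1 s) * (\sum_s P2 k.2 k.1.2 s * xi k.1.1 s)
  = \sum_(ms : T.-tuple 'I_d) \tr (P2 ms *m redS xi *m adj (P1 ms)).
Proof.
rewrite -(pair_bigA _ (fun (ar : 'I_D * 'I_D) (ms : T.-tuple 'I_d) =>
  conjc (\sum_s P1 ms ar.2 s * xi ar.1 s) * (\sum_s P2 ms ar.2 s * xi ar.1 s))) /=.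
rewrite exchange_big; apply: eq_bigr => ms _; rewrite -purification_inner.
by rewrite -(pair_bigA _ (fun a r =>
  conjc (\sum_s P1 ms r s * xi a s) * (\sum_s P2 ms r s * xi a s))).
Qed.

Lemma qfi_mps_state (Xf : R -> 'I_d -> 'M[C]_D) t dX (rho xi : 'M[C]_D) T :
  (forall m, is_derivemx t (Xf^~ m) (dX m)) ->
  \sum_m adj (Xf t m) *m Xf t m = 1%:M ->
  \sum_m adj (Xf t m) *m dX m = 0 ->
  chan (Xf t) rho = rho -> redS xi = rho ->
  qfi (@mps_state R D d T Xf xi) t = 4%:R * T%:R * \sum_m \tr (dX m *m rho *m adj (dX m)).
Proof.
move=> dXf X_iso X_gauge rho_fix xi_rho.
have dpsi k : dC (fun s => mps_state Xf xi s k) t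
              = \sum_s dmxprod (Xf t) dX k.2 k.1.2 s * xi k.1.1 s.
  apply: is_deriveC_dC; apply: is_deriveC_sum => s _.
  have := is_deriveCM (is_derivemx_mxprod dXf k.2 k.1.2 s) (is_deriveC_cst t (xi k.1.1 s)).
  by rewrite mulr0 addr0.
rewrite /qfi; under eq_bigr do rewrite dpsi; under [X in `|X|]eq_bigr do rewrite dpsi.
rewrite !sum_mps_inner xi_rho sum_mxtrace_dmxprod //.
rewrite (sum_mxtrace_mul_adj (fun ms : T.-tuple 'I_d => mxprod (Xf t) ms) (dmxprod (Xf t) dX)).
by rewrite sum_adj_dmxprod_mxprod // mul0mx mxtrace0 normr0 expr0n subr0 mulrA.
Qed.

End MatrixProductStates.

Section HKSGauge.
Variable R : realType.
Local Notation C := R[i].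
Variables D d : nat.

Lemma sum_adj_derivemx_skew (Af : R -> 'I_d -> 'M[C]_D) dA t :
  (forall s, \sum_m adj (Af s m) *m Af s m = 1%:M) ->
  (forall m, is_derivemx t (Af^~ m) (dA m)) ->
  adj (\sum_m adj (Af t m) *m dA m) = - \sum_m adj (Af t m) *m dA m.
Proof.
move=> A_iso dAf; apply/eqP; rewrite -addr_eq0 adj_sum_adj_mul -big_split /=; apply/eqP.
pose F s := \sum_m adj (Af s m) *m Af s m.
have dF : is_derivemx t F (\sum_m (adj (dA m) *m Af t m + adj (Af t m) *m dA m)).
  by apply: is_derivemx_sum => m _; apply: is_derivemx_mul; first apply: is_derivemx_adj.
have dF0 : is_derivemx t F 0 by rewrite /F; under eq_fun do rewrite A_iso; apply: is_derivemx_cst.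
by rewrite -(is_derivemx_dmx dF) (is_derivemx_dmx dF0).
Qed.

Definition hks_generator (c : 'I_d -> 'I_d -> C) : 'M[C]_d :=
  - (2%:R^-1) *: (\matrix_(i, j) c i j + adj (\matrix_(i, j) c i j)).

Lemma hks_generator_herm c : adj (hks_generator c) = hks_generator c.
Proof. by rewrite adjZ adjD adjK addrC rmorphN fmorphV rmorph_nat. Qed.

(* Taking adjoints, H is also [gramc A A c^+]. *)
Lemma gramc_hks_generator (A : 'I_d -> 'M[C]_D) c (H : 'M[C]_D) :
  adj H = H -> H = gramc A A (\matrix_(i, j) c i j) ->
  gramc A A (hks_generator c) = - H.
Proof.
move=> H_herm H_span; rewrite gramcZ gramcD -adj_gramc -H_span H_herm -mulr2n.
by rewrite -[H *+ 2]scaler_nat scalerA mulNr mulVf ?pnatr_eq0 // scaleN1r.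
Qed.

Variable K : R -> 'I_d -> 'M[C]_D.
Variable th0 : R.
Variable c : 'I_d -> 'I_d -> C.
Hypothesis K_diff : forall m, mx_differentiable (fun th => K th m).
Hypothesis K_iso : forall th, \sum_m adj (K th m) *m K th m = 1%:M.
Hypothesis K_hks : 'i *: (\sum_m adj (K th0 m) *m dmx (fun th => K th m) th0)
                   = \sum_i \sum_j c i j *: (adj (K th0 i) *m K th0 j).

Local Notation h := (hks_generator c).
Local Notation dK m := (dmx (fun th => K th m) th0).

Let dKf m : is_derivemx th0 (fun th => K th m) (dK m).
Proof. exact: mx_differentiable_is_derivemx. Qed.

Lemma is_derivemx_Wfam n : is_derivemx th0 (fun th => Wfam K h th n)
  (mixmx ('i *: h *m uth h th0) (K th0) n + mixmx (uth h th0) (fun m => dK m) n).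
Proof. exact: is_derivemx_mixmx (is_derivemx_uth h th0) dKf. Qed.

Lemma Wfam_isometry th : \sum_n adj (Wfam K h th n) *m Wfam K h th n = 1%:M.
Proof.
by rewrite gram_mixmx_unitary ?K_iso //; case: (uth_unitary (hks_generator_herm c) th).
Qed.

(* [sum_n W_n^+ W_n' = S - i gramc K K h] and [gramc K K h = - H_s = - i S]. *)
Lemma Wfam_gauge :
  \sum_n adj (Wfam K h th0 n) *m dmx (fun th => Wfam K h th n) th0 = 0.
Proof.
have [_ U_unitary] := uth_unitary (hks_generator_herm c) th0.
under eq_bigr do rewrite (is_derivemx_dmx (is_derivemx_Wfam _)) mulmxDr.
rewrite big_split /= !gram_mixmx U_unitary gramc1 adj_mul adjZ hks_generator_herm conjc_i.
rewrite mulmxA U_unitary mul1mx gramcZ.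
set S := \sum_m _.
have S_skew : adj S = - S := sum_adj_derivemx_skew K_iso dKf.
have Hs_herm : adj ('i *: S) = 'i *: S by rewrite adjZ S_skew conjc_i scalerN scaleNr opprK.
rewrite (gramc_hks_generator Hs_herm); last first.
  by rewrite K_hks; apply: eq_bigr => i _; apply: eq_bigr => j _; rewrite mxE.
by rewrite scalerN scaleNr opprK scalerA -expr2 sqr_i scaleN1r addNr.
Qed.

End HKSGauge.

Unset Implicit Arguments.

Theorem lemma2 (R : realType) (D d : nat) (K : R -> 'I_d -> 'M[R[i]]_D) (th0 : R) :
  (forall m, mx_differentiable (fun th => K th m)) ->
  (forall th, \sum_(m < d) adj (K th m) *m K th m = 1%:M) ->
  (* HKS condition at th0 *)
  (exists c : 'I_d -> 'I_d -> R[i],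
     'i *: (\sum_(m < d) adj (K th0 m) *m dmx (fun th => K th m) th0)
     = \sum_(i < d) \sum_(j < d) c i j *: (adj (K th0 i) *m K th0 j)) ->
  exists h : 'M[R[i]]_d,
    adj h = h /\
    (forall th m, K th m = \sum_(n < d) uth h th m n *: Wfam K h th n) /\
    \sum_(m < d) adj (Wfam K h th0 m) *m dmx (fun th => Wfam K h th m) th0 = 0 /\
    (forall rho : 'M[R[i]]_D,
      chan (K th0) rho = rho ->
      let W := Wfam K h th0 in
      let dW := fun m => dmx (fun th => Wfam K h th m) th0 in
      \sum_(m < d) \tr (W m *m rho *m adj (dW m)) = 0 /\
      (forall tau : nat,
         \tr (\sum_(m < d) dW m *m
                iter tau (chan (K th0)) (\sum_(n < d) W n *m rho *m adj (dW n))
                *m adj (W m)) = 0) /\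
      (forall (T : nat) (xi : 'M[R[i]]_D),
         redS xi = rho ->
         qfi (@mps_state R D d T (Wfam K h) xi) th0
         = 4%:R * T%:R * \sum_(m < d) \tr (dW m *m rho *m adj (dW m)))).
Proof.
move=> K_diff K_iso [c K_hks].
have h_herm := hks_generator_herm c.
have W_gauge := Wfam_gauge K_diff K_iso K_hks.
exists (hks_generator c); split=> //; split.
  by move=> th m; apply: mixmxK; case: (uth_unitary h_herm th).
split=> // rho rho_fix W dW.
have W_fix : chan W rho = rho.
  by rewrite chan_mixmx_unitary //; case: (uth_unitary h_herm th0).
split; [|split].
- by rewrite sum_mxtrace_mul_adj -adj_sum_adj_mul W_gauge adj0 mul0mx mxtrace0.
- by move=> tau; rewrite raddf_sum sum_mxtrace_mul_adj W_gauge mul0mx mxtrace0.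
- move=> T xi xi_rho; apply: qfi_mps_state W_fix xi_rho.
  + by move=> m; apply/is_derivemx_to_dmx/is_derivemx_Wfam.
  + exact: Wfam_isometry.
  + exact: W_gauge.
Qed.
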